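(* Let $I\subset\mathbb{R}$ be an interval, let $(a_i)_{i\ge1}$ be a real sequence with all $a_i\in I$, and let $\psi:I\to\mathbb{R}$ be a non-decreasing convex function. Then $T_a\subset T_{\psi(a)}$, where $\psi(a)=(\psi(a_i))_{i\ge1}$.
   Context: For a real sequence $(x_i)$, $\Delta x_i=x_{i+1}-x_i$. ''Increasing'' means strictly increasing. For a real sequence $a=(a_i)$, $T_a$ denotes the set of increasing real sequences $t=(t_i)$ with the same index set such that $(\Delta a_i/\Delta t_i)$ is non-decreasing. *)

From Stdlib Require Import Reals.
Open Scope R_scope.

(* Sequences indexed by nat (index 0 plays the role of the paper's index 1). *)
Definition Delta (x : nat -> R) (i : nat) : R := x (S i) - x i.

Definition increasing_seq (t : nat -> R) : Prop := forall i, t i < t (S i).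

Definition T_set (a : nat -> R) (t : nat -> R) : Prop :=
  increasing_seq t /\
  forall i, Delta a i / Delta t i <= Delta a (S i) / Delta t (S i).

Definition is_interval (I : R -> Prop) : Prop :=
  forall x y z, I x -> I y -> x <= z <= y -> I z.

Definition nondecreasing_on (I : R -> Prop) (f : R -> R) : Prop :=
  forall x y, I x -> I y -> x <= y -> f x <= f y.

Definition convex_on (I : R -> Prop) (f : R -> R) : Prop :=
  forall x y l, I x -> I y -> 0 <= l <= 1 ->
    f (l * x + (1 - l) * y) <= l * f x + (1 - l) * f y.

From Stdlib Require Import Reals Lra Psatz.
Open Scope R_scope.

(* Membership of t in T_a says that the ratios Delta a_i / Delta t_i
   are non-decreasing; since Delta t > 0 this is the cross-multiplied condition
   (a_{i+1} - a_i) * s' <= (a_{i+2} - a_{i+1}) * s with s, s' the two consecutive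
   increments of t.  The statement is therefore local to three consecutive
   points x = a_i, y = a_{i+1}, z = a_{i+2}, and we prove it by cases on the
   signs of y - x and z - y:
   - if y - x <= 0 <= z - y, monotonicity of psi alone gives the inequality;
   - if y - x > 0 (hence also z - y > 0), we combine the hypothesis with the
     chord inequality of the convex function psi on x < y < z, using that
     psi y - psi x >= 0;
   - if z - y < 0 (hence also y - x < 0), symmetrically on z < y < x. *)

Lemma div_le_div_cross (p q s1 s2 : R) :
  0 < s1 -> 0 < s2 -> (p / s1 <= q / s2 <-> p * s2 <= q * s1).
Proof.
  intros Hs1 Hs2.
  assert (Hp : p / s1 * (s1 * s2) = p * s2) by (field; lra).
  assert (Hq : q / s2 * (s1 * s2) = q * s1) by (field; lra).
  split; intro H.
  - rewrite <- Hp, <- Hq. apply Rmult_le_compat_r; [nra | exact H].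
  - apply (Rmult_le_reg_r (s1 * s2)); [nra |]. rewrite Hp, Hq. exact H.
Qed.

(* Chord inequality: for u <= v <= w in I, the slope of a convex psi on [u, v]
   is at most its slope on [v, w] (stated without division). *)
Lemma convex_chord (I : R -> Prop) (psi : R -> R) (u v w : R) :
  convex_on I psi -> I u -> I w -> u <= v <= w ->
  (psi v - psi u) * (w - v) <= (psi w - psi v) * (v - u).
Proof.
  intros Hconv Hu Hw Huvw.
  destruct (Req_dec u w) as [Euw | Nuw].
  { subst w. assert (v = u) by lra. subst v. lra. }
  (* v is the convex combination l * u + (1 - l) * w. *)
  set (l := (w - v) / (w - u)).
  assert (Hlw : l * (w - u) = w - v) by (unfold l; field; lra).
  assert (Hv : l * u + (1 - l) * w = v) by (unfold l; field; lra).
  assert (Hl : 0 <= l <= 1) by (split; nra).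
  pose proof (Hconv u w l Hu Hw Hl) as Hcomb. rewrite Hv in Hcomb.
  assert (Hscaled : (w - u) * psi v <= (w - u) * (l * psi u + (1 - l) * psi w))
    by (apply Rmult_le_compat_l; lra).
  nra.
Qed.

Lemma convex_nondecreasing_step (I : R -> Prop) (psi : R -> R)
    (x y z s1 s2 : R) :
  nondecreasing_on I psi -> convex_on I psi ->
  I x -> I y -> I z -> 0 < s1 -> 0 < s2 ->
  (y - x) * s2 <= (z - y) * s1 ->
  (psi y - psi x) * s2 <= (psi z - psi y) * s1.
Proof.
  intros Hmono Hconv Ix Iy Iz Hs1 Hs2 Hslope.
  destruct (Rlt_or_le x y) as [Hxy | Hyx].
  -
    assert (Hyz : y <= z) by nra.
    assert (HA : 0 <= psi y - psi x) by (pose proof (Hmono x y Ix Iy); lra).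
    pose proof (convex_chord I psi x y z Hconv Ix Iz (conj (Rlt_le _ _ Hxy) Hyz))
      as Hchord.
    apply (Rmult_le_reg_r (y - x)); [lra | nra].
  - destruct (Rlt_or_le z y) as [Hzy | Hyz].
    +
      assert (HA : psi y - psi x <= 0) by (pose proof (Hmono y x Iy Ix Hyx); lra).
      assert (Hxy : y < x) by nra.  (* forced by the slope condition *)
      pose proof (convex_chord I psi z y x Hconv Iz Ix (conj (Rlt_le _ _ Hzy) Hyx))
        as Hchord.
      apply (Rmult_le_reg_r (x - y)); [lra | nra].
    + (* y is a local minimum of the three values: psi decreases then increases *)
      pose proof (Hmono y x Iy Ix Hyx). pose proof (Hmono y z Iy Iz Hyz). nra.
Qed.

Theorem corollary3p2 (I : R -> Prop) (a : nat -> R) (psi : R -> R) :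
  is_interval I ->
  (forall i, I (a i)) ->
  nondecreasing_on I psi ->
  convex_on I psi ->
  forall t : nat -> R, T_set a t -> T_set (fun i => psi (a i)) t.
Proof.
  intros _ HI Hmono Hconv t [Ht Hslopes]. split; [exact Ht |]. intro i.
  unfold Delta in *.
  assert (Hs1 : 0 < t (S i) - t i) by (pose proof (Ht i); lra).
  assert (Hs2 : 0 < t (S (S i)) - t (S i)) by (pose proof (Ht (S i)); lra).
  apply div_le_div_cross; [exact Hs1 | exact Hs2 |].
  apply (convex_nondecreasing_step I psi); auto.
  apply div_le_div_cross; [exact Hs1 | exact Hs2 | exact (Hslopes i)].
Qed.
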